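(* Let $(\Omega,+)$ be a group and let $a,b$ be central subgroups of $\Omega$ (i.e. contained in the center). Then: (1) the ternary laws $(xyz)\mapsto\Gamma(x,a,y,b,z)$, $\check\Gamma(x,a,y,b,z)$ and $\Gamma(z,b,y,a,x)$ on $\mathcal{P}$ all coincide, and the ternary laws $\Sigma(b,x,y,z)$, $\check\Sigma(b,x,y,z)$, $\check\Sigma(b,z,y,x)$ and $\Sigma(b,z,y,x)$ on $\mathcal{P}$ all coincide; that is, $\mathcal{P}_{ab}=\check{\mathcal{P}}_{ab}=\mathcal{P}_{ba}^{opp}$ and $\mathcal{P}_b=\check{\mathcal{P}}_b=\check{\mathcal{P}}_b^{opp}=\mathcal{P}_b^{opp}$; (2) the set $\mathit{Gras}(\Omega)$ of all subgroups of $\Omega$ is stable under each of the four ternary laws $(x,y,z)\mapsto \Gamma(x,a,y,b,z)$, $\check\Gamma(x,a,y,b,z)$, $\Sigma(b,x,y,z)$, $\check\Sigma(b,x,y,z)$.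
   Context: $(\Omega,+)$ is a group written additively but not necessarily abelian; $\mathcal{P}$ is its power set. For $x,a,y,b,z\in\mathcal{P}$: $\Gamma(x,a,y,b,z)=\{\omega:\exists\alpha\in a,\beta\in b:\ \alpha+\omega+\beta\in y,\ \alpha+\omega\in z,\ \omega+\beta\in x\}$; $\check\Gamma(x,a,y,b,z)=\{\omega:\exists\alpha\in a,\beta\in b:\ \beta+\omega+\alpha\in y,\ \omega+\alpha\in z,\ \beta+\omega\in x\}$; $\Sigma(b,x,y,z)=\{\omega:\exists\beta,\beta'\in b:\ \omega+\beta\in x,\ \omega+\beta'+\beta\in y,\ \omega+\beta'\in z\}$; $\check\Sigma(b,x,y,z)=\{\omega:\exists\beta,\beta'\in b:\ \beta+\omega\in x,\ \beta+\beta'+\omega\in y,\ \beta'+\omega\in z\}$. $\mathcal{P}_{ab},\check{\mathcal P}_{ab},\mathcal P_b,\check{\mathcal P}_b$ denote $\mathcal P$ with the laws $\Gamma(x,a,y,b,z)$, $\check\Gamma(x,a,y,b,z)$, $\Sigma(b,x,y,z)$, $\check\Sigma(b,x,y,z)$ respectively; for a ternary law $(xyz)$, the opposite law is $(x,y,z)\mapsto(zyx)$, denoted by the superscript $opp$. *)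

(* Subsets of Omega (elements of the power set P) are predicates G -> Prop;
   equality of sets is Leibniz equality of predicates. *)
Set Implicit Arguments.

Section Defs.
Variables (G : Type) (add : G -> G -> G) (zero : G) (opp : G -> G).

Record is_group : Prop := {
  addA : forall u v w, add u (add v w) = add (add u v) w;
  add0l : forall u, add zero u = u;
  add0r : forall u, add u zero = u;
  addNl : forall u, add (opp u) u = zero;
  addNr : forall u, add u (opp u) = zero }.

Definition pset := G -> Prop.

Definition is_subgroup (s : pset) : Prop :=
  s zero /\ (forall u v, s u -> s v -> s (add u v)) /\ (forall u, s u -> s (opp u)).

Definition central (s : pset) : Prop :=
  forall u, s u -> forall w, add u w = add w u.

Definition Gamma (x a y b z : pset) : pset := fun w =>
  exists al be, a al /\ b be /\ y (add (add al w) be) /\ z (add al w) /\ x (add w be).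

Definition GammaC (x a y b z : pset) : pset := fun w =>
  exists al be, a al /\ b be /\ y (add (add be w) al) /\ z (add w al) /\ x (add be w).

Definition Sigma (b x y z : pset) : pset := fun w =>
  exists be be', b be /\ b be' /\ x (add w be) /\ y (add (add w be') be) /\ z (add w be').

Definition SigmaC (b x y z : pset) : pset := fun w =>
  exists be be', b be /\ b be' /\ x (add be w) /\ y (add (add be be') w) /\ z (add be' w).

End Defs.

(* Central translations can all be moved to the right of ω, which turns Γ(x,a,y,b,z),
   Γ̌(x,a,y,b,z), Σ(b,x,y,z) and Σ̌(b,x,y,z) into instances of one law GammaR, with
   conditions ω + α ∈ z, ω + β ∈ x, ω + α + β ∈ y.  The identities (1) are then
   reorderings of witnesses, and for (2) the conditions are preserved by sums and
   opposites because ω + α is additive in (ω, α) when α is central. *)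
From Stdlib Require Import FunctionalExtensionality PropExtensionality.
Set Implicit Arguments.

Lemma pset_ext (G : Type) (s t : pset G) : (forall w, s w <-> t w) -> s = t.
Proof.
  intro Hst. apply functional_extensionality; intro w.
  apply propositional_extensionality, Hst.
Qed.

Section CentralAlgebra.
Variables (G : Type) (add : G -> G -> G) (zero : G) (opp : G -> G).
Hypothesis HG : is_group add zero opp.

Lemma add_swap_central c u v : (forall w, add c w = add w c) ->
  add (add u c) v = add (add u v) c.
Proof.
  intro Hc. rewrite <- (addA HG), Hc, (addA HG). reflexivity.
Qed.

Lemma add_interchange_central c u v d : (forall w, add c w = add w c) ->
  add (add u c) (add v d) = add (add u v) (add c d).
Proof.
  intro Hc.
  rewrite <- (addA HG u c), (addA HG c v), Hc, <- (addA HG v c), (addA HG u v).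
  reflexivity.
Qed.

Lemma oppD u v : opp (add u v) = add (opp v) (opp u).
Proof.
  transitivity (add (opp (add u v)) (add (add u v) (add (opp v) (opp u)))).
  - rewrite <- (addA HG u v), (addA HG v), (addNr HG), (add0l HG), (addNr HG), (add0r HG).
    reflexivity.
  - rewrite (addA HG), (addNl HG), (add0l HG). reflexivity.
Qed.

Lemma opp_central c : (forall w, add c w = add w c) ->
  forall w, add (opp c) w = add w (opp c).
Proof.
  intros Hc w.
  transitivity (add (opp c) (add (add w c) (opp c))).
  - rewrite <- (addA HG w), (addNr HG), (add0r HG). reflexivity.
  - rewrite <- Hc, !(addA HG), (addNl HG), (add0l HG). reflexivity.
Qed.

Lemma opp_add_central u c : (forall w, add c w = add w c) ->
  opp (add u c) = add (opp u) (opp c).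
Proof. intro Hc. rewrite oppD. apply (opp_central Hc). Qed.

End CentralAlgebra.

Definition GammaR (G : Type) (add : G -> G -> G) (x a y b z : pset G) : pset G :=
  fun w => exists al be, a al /\ b be /\
    y (add (add w al) be) /\ z (add w al) /\ x (add w be).

Section Laws.
Context {G : Type} {add : G -> G -> G} {zero : G} {opp : G -> G}.
Hypothesis HG : is_group add zero opp.
Context {x a y b z : pset G}.

Lemma GammaC_eq_Gamma_opp : GammaC add x a y b z = Gamma add z b y a x.
Proof.
  apply pset_ext; intro w; split;
    intros (al & be & Hal & Hbe & Hy & Hz & Hx); exists be, al; tauto.
Qed.

Lemma Sigma_eq_GammaR : Sigma add b x y z = GammaR add x b y b z.
Proof.
  apply pset_ext; intro w; split;
    intros (be & be' & Hbe & Hbe' & H1 & H2 & H3); exists be', be; tauto.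
Qed.

Lemma Gamma_eq_GammaR : central add a -> Gamma add x a y b z = GammaR add x a y b z.
Proof.
  intro Hac. apply pset_ext; intro w; split;
    intros (al & be & Hal & Hbe & Hy & Hz & Hx); exists al, be;
    rewrite (Hac al Hal w) in *; tauto.
Qed.

Lemma GammaC_eq_GammaR : central add b -> GammaC add x a y b z = GammaR add x a y b z.
Proof.
  intro Hbc. apply pset_ext; intro w; split;
    intros (al & be & Hal & Hbe & Hy & Hz & Hx); exists al, be;
    rewrite (Hbc be Hbe w), (add_swap_central HG be w al (Hbc be Hbe)) in *; tauto.
Qed.

Lemma SigmaC_eq_GammaR : central add b -> SigmaC add b x y z = GammaR add x b y b z.
Proof.
  intro Hbc. apply pset_ext; intro w; split;
    [ intros (be & be' & Hbe & Hbe' & H1 & H2 & H3); exists be', be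
    | intros (be' & be & Hbe' & Hbe & H1 & H2 & H3); exists be, be' ];
    assert (E : add (add be be') w = add (add w be') be)
      by (rewrite <- (addA HG), (Hbc be' Hbe' w), (Hbc be Hbe); reflexivity);
    rewrite E, (Hbc be' Hbe' w), (Hbc be Hbe w) in *; tauto.
Qed.

Lemma GammaR_opp : central add b -> GammaR add x a y b z = GammaR add z b y a x.
Proof.
  intro Hbc. apply pset_ext; intro w; split;
    intros (al & be & Hal & Hbe & Hy & Hz & Hx); exists be, al.
  - rewrite (add_swap_central HG be w al (Hbc be Hbe)) in *; tauto.
  - rewrite <- (add_swap_central HG al w be (Hbc al Hal)) in *; tauto.
Qed.

Lemma GammaR_subgroup :
  is_subgroup add zero opp a -> central add a ->
  is_subgroup add zero opp b -> central add b ->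
  is_subgroup add zero opp x -> is_subgroup add zero opp y ->
  is_subgroup add zero opp z ->
  is_subgroup add zero opp (GammaR add x a y b z).
Proof.
  intros (Ha0 & HaD & HaN) Hac (Hb0 & HbD & HbN) Hbc
    (Hx0 & HxD & HxN) (Hy0 & HyD & HyN) (Hz0 & HzD & HzN).
  split; [|split].
  - exists zero, zero. rewrite !(add0r HG). tauto.
  - intros w1 w2 (al1 & be1 & Hal1 & Hbe1 & Hy1 & Hz1 & Hx1)
      (al2 & be2 & Hal2 & Hbe2 & Hy2 & Hz2 & Hx2).
    exists (add al1 al2), (add be1 be2).
    rewrite <- (add_interchange_central HG al1 w1 w2 al2 (Hac al1 Hal1)),
      <- !(add_interchange_central HG be1 _ _ be2 (Hbc be1 Hbe1)).
    repeat split; auto.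
  - intros w (al & be & Hal & Hbe & Hy & Hz & Hx).
    exists (opp al), (opp be).
    rewrite <- (opp_add_central HG _ _ (Hac al Hal)),
      <- !(opp_add_central HG _ _ (Hbc be Hbe)).
    repeat split; auto.
Qed.

End Laws.

Theorem theorem3p3 (G : Type) (add : G -> G -> G) (zero : G) (opp : G -> G)
  (HG : is_group add zero opp) (a b : pset G)
  (Ha : is_subgroup add zero opp a) (Hac : central add a)
  (Hb : is_subgroup add zero opp b) (Hbc : central add b) :
  (forall x y z : pset G,
     Gamma add x a y b z = GammaC add x a y b z /\
     GammaC add x a y b z = Gamma add z b y a x) /\
  (forall x y z : pset G,
     Sigma add b x y z = SigmaC add b x y z /\
     SigmaC add b x y z = SigmaC add b z y x /\
     SigmaC add b z y x = Sigma add b z y x) /\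
  (forall x y z : pset G,
     is_subgroup add zero opp x -> is_subgroup add zero opp y ->
     is_subgroup add zero opp z ->
     is_subgroup add zero opp (Gamma add x a y b z) /\
     is_subgroup add zero opp (GammaC add x a y b z) /\
     is_subgroup add zero opp (Sigma add b x y z) /\
     is_subgroup add zero opp (SigmaC add b x y z)).
Proof.
  split; [|split]; intros x y z.
  - split; [|apply GammaC_eq_Gamma_opp].
    rewrite (Gamma_eq_GammaR Hac), (GammaC_eq_GammaR HG Hbc). reflexivity.
  - rewrite !(SigmaC_eq_GammaR HG Hbc), !Sigma_eq_GammaR.
    split; [|split]; [reflexivity | apply (GammaR_opp HG Hbc) | reflexivity].
  - intros Hx Hy Hz.
    rewrite (Gamma_eq_GammaR Hac), (GammaC_eq_GammaR HG Hbc), Sigma_eq_GammaR,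
      (SigmaC_eq_GammaR HG Hbc).
    split; [|split; [|split]]; apply (GammaR_subgroup HG); assumption.
Qed.
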